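(* Let $\Lambda\in\mathcal H_I$ and $w$ a capacity. Then for all $X\in\mathcal X$, $$\Lambda\mathrm{VaR}^{w}(X)=\inf_{x\in\mathbb R}\{\mathrm{VaR}^w_{\Lambda(x)}(X)\vee x\}=\sup_{x\in\mathbb R}\{\mathrm{VaR}^w_{\Lambda(x)}(X)\wedge x\}$$ and $$\Lambda\mathrm{VaR}^{+,w}(X)=\inf_{x\in\mathbb R}\{\mathrm{VaR}^{+,w}_{\Lambda(x)}(X)\vee x\}=\sup_{x\in\mathbb R}\{\mathrm{VaR}^{+,w}_{\Lambda(x)}(X)\wedge x\},$$ where values in $[-\infty,\infty]$ are allowed.
   Context: Let $(\Omega,\mathcal F)$ be a measurable space and $\mathcal X$ a set of real-valued random variables on it containing all bounded ones. A capacity is a map $w:\mathcal F\to[0,1]$ with $w(\emptyset)=0$, $w(\Omega)=1$, and $A\subseteq B\Rightarrow w(A)\le w(B)$. For $\Lambda:\mathbb R\to[0,1]$: $\Lambda\mathrm{VaR}^w(X)=\inf\{x\in\mathbb R: w(X>x)\le\Lambda(x)\}$, $\Lambda\mathrm{VaR}^{+,w}(X)=\sup\{x\in\mathbb R: w(X>x)\ge\Lambda(x)\}$ ($\inf\emptyset=\infty$, $\sup\emptyset=-\infty$). For $p\in[0,1]$, the Choquet quantiles are $\mathrm{VaR}^w_p=\Lambda\mathrm{VaR}^w$ and $\mathrm{VaR}^{+,w}_p=\Lambda\mathrm{VaR}^{+,w}$ with the constant function $\Lambda\equiv p$. $\mathcal H_I$ is the set of increasing functions $\Lambda:\mathbb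 R\to(0,1)$. $a\vee b=\max(a,b)$, $a\wedge b=\min(a,b)$. *)

From HB Require Import structures.
From mathcomp Require Import all_boot all_order all_algebra.
From mathcomp Require Import all_classical all_reals all_analysis.
Set Implicit Arguments. Unset Strict Implicit. Unset Printing Implicit Defensive.
Import Order.TTheory GRing.Theory Num.Theory.
Local Open Scope classical_set_scope.
Local Open Scope ring_scope.

(* A capacity on the sigma-algebra of T: w : F -> [0,1], w(emptyset)=0,
   w(Omega)=1, monotone.  w is given on all of set T but only its values on
   measurable sets matter. *)
Definition capacity (d : measure_display) (T : measurableType d) (R : realType)
  (w : set T -> R) : Prop :=
  w set0 = 0 /\ w setT = 1 /\
  (forall A, measurable A -> 0 <= w A <= 1) /\
  (forall A B, measurable A -> measurable B -> A `<=` B -> w A <= w B).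

Definition LVaR (T : Type) (R : realType) (w : set T -> R) (L : R -> R)
  (X : T -> R) : \bar R :=
  ereal_inf [set x%:E | x in [set x : R | w [set t | x < X t] <= L x]].

Definition LVaRp (T : Type) (R : realType) (w : set T -> R) (L : R -> R)
  (X : T -> R) : \bar R :=
  ereal_sup [set x%:E | x in [set x : R | L x <= w [set t | x < X t]]].

Definition VaR (T : Type) (R : realType) (w : set T -> R) (p : R) (X : T -> R) :=
  LVaR w (fun _ => p) X.
Definition VaRp (T : Type) (R : realType) (w : set T -> R) (p : R) (X : T -> R) :=
  LVaRp w (fun _ => p) X.

Definition H_I (R : realType) (L : R -> R) : Prop :=
  (forall x y : R, x <= y -> L x <= L y) /\ (forall x, 0 < L x < 1).

From HB Require Import structures.
From mathcomp Require Import all_boot all_order all_algebra.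
From mathcomp Require Import all_classical all_reals all_analysis.
From mathcomp Require Import lra.

Set Implicit Arguments.
Unset Strict Implicit.
Unset Printing Implicit Defensive.
Import Order.TTheory GRing.Theory Num.Theory.
Local Open Scope classical_set_scope.
Local Open Scope ring_scope.

(* With g(x) := w(X > x), LVaR and LVaRp are the infimum, resp. supremum, of
   the points where the nonincreasing g meets the nondecreasing Lambda; only
   these two monotonicities are used.  Replacing Lambda by the constant
   Lambda(x) keeps the level on the same side of g at x, so the crossing of g
   with the constant lies on the same side of x as the true crossing; comparing
   the two crossings on both sides of x gives all four identities. *)

Lemma lte_exists_fin (R : realType) (s a : \bar R) :
  (s < a)%E -> exists x : R, (s < x%:E < a)%E.
Proof.
case: s => [s| |]; case: a => [a| |] //= sa.
- by exists ((s + a) / 2); rewrite !lte_fin; rewrite lte_fin in sa; apply/andP; split; lra.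
- by exists (s + 1); rewrite lte_fin ltey andbT; lra.
- by exists (a - 1); rewrite ltNye lte_fin /=; lra.
- by exists 0; rewrite ltNye ltey.
Qed.

Section Crossing.
Variable R : realType.
Variable g : R -> R.
Hypothesis g_nonincr : {homo g : x y /~ x <= y}.

Definition crossing_inf (p : R -> R) : \bar R :=
  ereal_inf [set x%:E | x in [set x | g x <= p x]].
Definition crossing_sup (p : R -> R) : \bar R :=
  ereal_sup [set x%:E | x in [set x | p x <= g x]].

Local Open Scope ereal_scope.

Lemma crossing_inf_le (p : R -> R) x : (g x <= p x)%R -> crossing_inf p <= x%:E.
Proof. by move=> gp; apply: ereal_inf_lbound; exists x. Qed.

Lemma le_crossing_sup (p : R -> R) x : (p x <= g x)%R -> x%:E <= crossing_sup p.
Proof. by move=> pg; apply: ereal_sup_ubound; exists x. Qed.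

Lemma le_crossing_inf_cst c x : (c < g x)%R -> x%:E <= crossing_inf (fun=> c).
Proof.
move=> cg; apply/ereal_infP => _ [y /= gy <-].
rewrite lee_fin leNgt; apply/negP => yx.
by move: (le_trans (g_nonincr (ltW yx)) gy); rewrite leNgt cg.
Qed.

Lemma crossing_sup_cst_le c x : (g x < c)%R -> crossing_sup (fun=> c) <= x%:E.
Proof.
move=> gc; apply/ereal_supP => _ [y /= cy <-].
rewrite lee_fin leNgt; apply/negP => xy.
by move: (le_trans cy (g_nonincr (ltW xy))); rewrite leNgt gc.
Qed.

Variable L : R -> R.
Hypothesis L_nondecr : {homo L : x y / (x <= y)%R}.

Lemma crossing_inf_eq_inf_max :
  crossing_inf L = ereal_inf [set maxe (crossing_inf (fun=> L x)) x%:E | x in [set: R]].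
Proof.
apply/eqP; rewrite eq_le; apply/andP; split.
- apply/ereal_infP => _ [x _ <-]; rewrite leNgt; apply/negP.
  rewrite gt_max => /andP[/ereal_inf_ltP [_ [y /= gy <-] lt_y] lt_x].
  have [xy|yx] := leP x y.
  + have gLy : (g y <= L y)%R by exact: le_trans gy (L_nondecr xy).
    by move: (crossing_inf_le gLy); rewrite leNgt lt_y.
  + have gx : (g x <= L x)%R by exact: le_trans (g_nonincr (ltW yx)) gy.
    by move: (crossing_inf_le gx); rewrite leNgt lt_x.
- apply/ereal_infP => _ [x gx <-]; apply: ge_ereal_inf.
  exists x%:E => //; exists x => //.
  by apply: max_r; exact: crossing_inf_le.
Qed.

Lemma crossing_inf_eq_sup_min :
  crossing_inf L = ereal_sup [set mine (crossing_inf (fun=> L x)) x%:E | x in [set: R]].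
Proof.
apply/eqP; rewrite eq_le; apply/andP; split.
- rewrite leNgt; apply/negP => /lte_exists_fin [x /andP[lt_x x_lt]].
  have Lg : (L x < g x)%R.
    by rewrite ltNge; apply: contraTN x_lt => gx; rewrite -leNgt crossing_inf_le.
  have : x%:E <= ereal_sup [set mine (crossing_inf (fun=> L x)) x%:E | x in [set: R]].
    by apply: ereal_sup_ubound; exists x => //; apply: min_r; exact: le_crossing_inf_cst.
  by rewrite leNgt lt_x.
- apply/ereal_supP => _ [x _ <-]; rewrite leNgt; apply/negP.
  move=> /ereal_inf_ltP [_ [y /= gy <-]]; rewrite lt_min lte_fin => /andP[lt_y yx].
  have gLx : (g y <= L x)%R by exact: le_trans gy (L_nondecr (ltW yx)).
  by move: (crossing_inf_le (p := fun=> L x) gLx); rewrite leNgt lt_y.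
Qed.

Lemma crossing_sup_eq_inf_max :
  crossing_sup L = ereal_inf [set maxe (crossing_sup (fun=> L x)) x%:E | x in [set: R]].
Proof.
apply/eqP; rewrite eq_le; apply/andP; split.
- apply/ereal_infP => _ [x _ <-]; rewrite leNgt; apply/negP.
  move=> /ereal_sup_gtP [_ [y /= Ly <-]]; rewrite gt_max lte_fin => /andP[lt_y xy].
  have Lxg : (L x <= g y)%R by exact: le_trans (L_nondecr (ltW xy)) Ly.
  by move: (le_crossing_sup (p := fun=> L x) Lxg); rewrite leNgt lt_y.
- rewrite leNgt; apply/negP => /lte_exists_fin [x /andP[lt_x x_lt]].
  have gL : (g x < L x)%R.
    by rewrite ltNge; apply: contraTN lt_x => Lx; rewrite -leNgt le_crossing_sup.
  have : ereal_inf [set maxe (crossing_sup (fun=> L x)) x%:E | x in [set: R]] <= x%:E.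
    by apply: ereal_inf_lbound; exists x => //; apply: max_r; exact: crossing_sup_cst_le.
  by rewrite leNgt x_lt.
Qed.

Lemma crossing_sup_eq_sup_min :
  crossing_sup L = ereal_sup [set mine (crossing_sup (fun=> L x)) x%:E | x in [set: R]].
Proof.
apply/eqP; rewrite eq_le; apply/andP; split.
- apply/ereal_supP => _ [x Lx <-]; apply: le_ereal_sup_tmp.
  exists x%:E => //; exists x => //.
  by apply: min_r; exact: le_crossing_sup.
- apply/ereal_supP => _ [x _ <-]; rewrite leNgt; apply/negP.
  rewrite lt_min => /andP[/ereal_sup_gtP [_ [y /= Ly <-] y_lt] x_lt].
  have [xy|yx] := leP x y.
  + have Lx : (L x <= g x)%R by exact: le_trans Ly (g_nonincr xy).
    by move: (le_crossing_sup Lx); rewrite leNgt x_lt.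
  + have Lgy : (L y <= g y)%R by exact: le_trans (L_nondecr (ltW yx)) Ly.
    by move: (le_crossing_sup Lgy); rewrite leNgt y_lt.
Qed.

End Crossing.

Lemma capacity_exceedance_nonincr (d : measure_display) (T : measurableType d)
    (R : realType) (w : set T -> R) (X : T -> R) :
  capacity w -> measurable_fun setT X ->
  {homo (fun x => w [set t | x < X t]) : x y /~ x <= y}.
Proof.
move=> [_ [_ [_ w_mono]]] mX.
have m_exc (x : R) : measurable [set t | x < X t].
  rewrite (_ : [set t | x < X t] = X @^-1` `]x, +oo[%classic); last first.
    by apply/seteqP; split => t /=; rewrite in_itv /= andbT.
  by rewrite -[X in measurable X]setTI; exact: mX.
by move=> x y xy; apply: w_mono => // t /=; exact: le_lt_trans.
Qed.

Theorem mainTheorem3 (d : measure_display) (T : measurableType d) (R : realType)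
  (w : set T -> R) (L : R -> R) (X : T -> R) :
  capacity w -> H_I L -> measurable_fun setT X ->
  (LVaR w L X = ereal_inf [set maxe (VaR w (L x) X) x%:E | x in [set: R]] /\
   LVaR w L X = ereal_sup [set mine (VaR w (L x) X) x%:E | x in [set: R]]) /\
  (LVaRp w L X = ereal_inf [set maxe (VaRp w (L x) X) x%:E | x in [set: R]] /\
   LVaRp w L X = ereal_sup [set mine (VaRp w (L x) X) x%:E | x in [set: R]]).
Proof.
move=> w_cap [L_nondecr _] mX.
have g_nonincr := capacity_exceedance_nonincr w_cap mX.
split; split.
- exact (crossing_inf_eq_inf_max g_nonincr L_nondecr).
- exact (crossing_inf_eq_sup_min g_nonincr L_nondecr).
- exact (crossing_sup_eq_inf_max g_nonincr L_nondecr).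
- exact (crossing_sup_eq_sup_min g_nonincr L_nondecr).
Qed.
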